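(* Let $K>0$, $D>0$, $\sigma>0$, $r\in\mathbf{R}$, $0<\tau<T$, and let $N$ denote the standard normal cumulative distribution function. For $u>0$ define the pre-dividend option value \[ V(u,\tau)=\begin{cases}(u-D)N(d(u))-Ke^{-r(T-\tau)}N\!\left(d(u)-\sigma\sqrt{T-\tau}\right), & u>D,\\ 0,& u\le D,\end{cases} \qquad d(u)=\frac{\log(u-D)-\log K+\left(r+\frac12\sigma^2\right)(T-\tau)}{\sigma\sqrt{T-\tau}}, \] and, for $u>D$, its derivative \[ V'(u,\tau)=N(d(u))+\frac{e^{-\frac12 d(u)^2}}{\sigma\sqrt{2\pi(T-\tau)}}-\frac{Ke^{-r(T-\tau)}e^{-\frac12\left(d(u)-\sigma\sqrt{T-\tau}\right)^2}}{\sigma\sqrt{2\pi(T-\tau)}\,(u-D)}. \] For $S>0$ let \[ V(S,0)=\frac{e^{-r\tau}}{\sigma\sqrt{2\pi\tau}}\int_{-\infty}^{\infty}V(e^{y},\tau)\exp\!\left[-\frac{(x-y)^2}{2\sigma^2\tau}\right]dy,\qquad x=\log S+\left(r-\frac{\sigma^2}{2}\right)\tau, \] which is the time-$0$ solution of the Black-Scholes equation $\frac{\partial V}{\partial t}+\frac12\sigma^2S^2\frac{\partial^2V}{\partial S^2}+rS\frac{\partial V}{\partial S}-rV=0$ with terminal condition $V(S,T)=\max\{0,S-K\}$, for a stock paying dividend $D$ at time $\tau$ (the option value being continuous across the dividend date while the stock price drops by $D$). Let $S^*>D$ be fixed and let $M\ge1$ be an integer. Set, for $i=0,\dots,M$,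 \[ S_i=D+\frac{S^*-D}{M}\,i,\qquad d_i=\frac{\log S-\log S_i+\left(r+\frac12\sigma^2\right)\tau}{\sigma\sqrt\tau},\qquad d^*=\frac{\log S-\log S^*+\left(r+\frac12\sigma^2\right)\tau}{\sigma\sqrt\tau}, \] and, for $i=1,\dots,M$, let $S_{i+\frac12}=\frac{S_{i-1}+S_i}{2}$ denote the midpoint of $[S_{i-1},S_i]$, \[ \alpha_i=\frac{M}{S^*-D}\left[V(S_i,\tau)-V(S_{i-1},\tau)\right],\quad A_i=N(d_{i-1})-N(d_i),\quad B_i=N(d_{i-1}-\sigma\sqrt\tau)-N(d_i-\sigma\sqrt\tau). \] Then $V^-_{S^*,M}(S,0)\le V(S,0)\le V^+_{S^*,M}(S,0)$, where \[ V^+_{S^*,M}(S,0)=\sum_{i=1}^M\left\{\alpha_iA_iS+e^{-r\tau}\left[V(S_{i-1},\tau)-\alpha_iS_{i-1}\right]B_i\right\}+SN(d^* )+e^{-r\tau}\left[V(S^*,\tau)-S^*\right]N(d^*-\sigma\sqrt\tau), \] \[ V^-_{S^*,M}(S,0)=S\sum_{i=1}^M V'\!\left(S_{i+\frac12},\tau\right)A_i+e^{-r\tau}\sum_{i=1}^M\left[V\!\left(S_{i+\frac12},\tau\right)-V'\!\left(S_{i+\frac12},\tau\right)S_{i+\frac12}\right]B_i+SN(d^* )-e^{-r\tau}\left(D+Ke^{-r(T-\tau)}\right)N(d^*-\sigma\sqrt\tau). \]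
   Context: Black-Scholes economy: the stock price follows a geometric Brownian motion with volatility $\sigma$ on $[0,\tau)$ and on $[\tau,T]$, jumping down by the known dividend $D$ at the known time $\tau$; $r$ is the constant risk-free rate; the European call has strike $K$ and maturity $T$. $V(u,\tau)$ is the option value at time $\tau$ just before the dividend as a function of the pre-dividend stock price $u$. The paper describes $S_{i+\frac12}$ as ''the middle point of each interval $[S_{i-1},S_i]$''. *)

From Stdlib Require Import Reals Lra.
From Coquelicot Require Import Coquelicot.
Open Scope R_scope.

Definition npdf (t : R) : R := exp (- t ^ 2 / 2) / sqrt (2 * PI).
Definition Ncdf (x : R) : R :=
  RInt_gen npdf (Rbar_locally m_infty) (at_point x).

Definition dfun (K D sigma r tau T u : R) : R :=
  (ln (u - D) - ln K + (r + sigma ^ 2 / 2) * (T - tau)) / (sigma * sqrt (T - tau)).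

Definition Vtau (K D sigma r tau T u : R) : R :=
  if Rlt_dec D u then
    (u - D) * Ncdf (dfun K D sigma r tau T u)
    - K * exp (- r * (T - tau)) * Ncdf (dfun K D sigma r tau T u - sigma * sqrt (T - tau))
  else 0.

Definition Vtau' (K D sigma r tau T u : R) : R :=
  let d := dfun K D sigma r tau T u in
  Ncdf d
  + exp (- d ^ 2 / 2) / (sigma * sqrt (2 * PI * (T - tau)))
  - K * exp (- r * (T - tau)) * exp (- (d - sigma * sqrt (T - tau)) ^ 2 / 2)
      / (sigma * sqrt (2 * PI * (T - tau)) * (u - D)).

Definition V0 (K D sigma r tau T S : R) : R :=
  let x := ln S + (r - sigma ^ 2 / 2) * tau in
  exp (- r * tau) / (sigma * sqrt (2 * PI * tau)) *
  RInt_gen (fun y => Vtau K D sigma r tau T (exp y) * exp (- (x - y) ^ 2 / (2 * sigma ^ 2 * tau)))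
    (Rbar_locally m_infty) (Rbar_locally p_infty).

Definition Sgrid (D Sstar : R) (M i : nat) : R := D + (Sstar - D) / INR M * INR i.

Definition Smid (D Sstar : R) (M i : nat) : R :=
  (Sgrid D Sstar M (i - 1) + Sgrid D Sstar M i) / 2.

Definition dgen (sigma r tau S X : R) : R :=
  (ln S - ln X + (r + sigma ^ 2 / 2) * tau) / (sigma * sqrt tau).

Definition d_i (D sigma r tau Sstar S : R) (M i : nat) : R :=
  dgen sigma r tau S (Sgrid D Sstar M i).

Definition alpha_i (K D sigma r tau T Sstar : R) (M i : nat) : R :=
  INR M / (Sstar - D) *
  (Vtau K D sigma r tau T (Sgrid D Sstar M i) - Vtau K D sigma r tau T (Sgrid D Sstar M (i - 1))).

Definition A_i (D sigma r tau Sstar S : R) (M i : nat) : R :=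
  Ncdf (d_i D sigma r tau Sstar S M (i - 1)) - Ncdf (d_i D sigma r tau Sstar S M i).

Definition B_i (D sigma r tau Sstar S : R) (M i : nat) : R :=
  Ncdf (d_i D sigma r tau Sstar S M (i - 1) - sigma * sqrt tau)
  - Ncdf (d_i D sigma r tau Sstar S M i - sigma * sqrt tau).

Definition Vplus (K D sigma r tau T Sstar S : R) (M : nat) : R :=
  let dstar := dgen sigma r tau S Sstar in
  sum_n_m (fun i =>
     alpha_i K D sigma r tau T Sstar M i * A_i D sigma r tau Sstar S M i * S
     + exp (- r * tau) *
       (Vtau K D sigma r tau T (Sgrid D Sstar M (i - 1))
        - alpha_i K D sigma r tau T Sstar M i * Sgrid D Sstar M (i - 1))
       * B_i D sigma r tau Sstar S M i) 1 M
  + S * Ncdf dstar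
  + exp (- r * tau) * (Vtau K D sigma r tau T Sstar - Sstar) * Ncdf (dstar - sigma * sqrt tau).

Definition Vminus (K D sigma r tau T Sstar S : R) (M : nat) : R :=
  let dstar := dgen sigma r tau S Sstar in
  S * sum_n_m (fun i =>
     Vtau' K D sigma r tau T (Smid D Sstar M i) * A_i D sigma r tau Sstar S M i) 1 M
  + exp (- r * tau) * sum_n_m (fun i =>
     (Vtau K D sigma r tau T (Smid D Sstar M i)
      - Vtau' K D sigma r tau T (Smid D Sstar M i) * Smid D Sstar M i)
     * B_i D sigma r tau Sstar S M i) 1 M
  + S * Ncdf dstar
  - exp (- r * tau) * (D + K * exp (- r * (T - tau))) * Ncdf (dstar - sigma * sqrt tau).

From Stdlib Require Import Reals Lra Lia.
From Coquelicot Require Import Coquelicot.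
Open Scope R_scope.

(* In the log-price y = ln u, V(S,0) is the integral of V(e^y, tau) against the discounted
   lognormal density.  The function V(., tau) is the upper envelope over t of the maps
   u |-> (u - D) N(t) - K e^{-r(T-tau)} N(t - sigma sqrt(T-tau)), which are affine in u: for
   u > D the envelope is attained at t = d(u) (so the slope there is N(d(u)) = V'(u)), and
   for u <= D all of them are <= 0 = V.  Hence V is convex, nondecreasing and satisfies
   V(b) - V(a) <= b - a for a <= b.  On each cell [S_{i-1}, S_i] it therefore lies below its chord and
   above its tangent at the midpoint, and beyond Sstar it lies between the forward value
   u - D - K e^{-r(T-tau)} (the envelope as t -> +oo) and u + V(Sstar) - Sstar.  Integrating
   p e^y + q against the density in closed form turns these affine bounds into the terms
   with A_i and B_i and the tail terms of V^+ and V^-.  That N runs from 0 to 1 rests on the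
   identity (N(x) - 1/2)^2 + 2 T(x, 1) = 1/4 for Owen's T function. *)

Lemma ex_derive_continuous_R (f : R -> R) x : ex_derive f x -> continuous f x.
Proof. apply (ex_derive_continuous (V := R_NormedModule)). Qed.

Lemma RInt_correct_R (f : R -> R) a b : ex_RInt f a b -> is_RInt f a b (RInt f a b).
Proof. apply (RInt_correct (V := R_CompleteNormedModule)). Qed.

Lemma ex_RInt_continuous_R (f : R -> R) a b :
  (forall z, Rmin a b <= z <= Rmax a b -> continuous f z) -> ex_RInt f a b.
Proof. apply (ex_RInt_continuous (V := R_CompleteNormedModule)). Qed.

Lemma is_RInt_gen_p_of_filterlim (f : R -> R) (a l : R) :
  (forall b, ex_RInt f a b) ->
  filterlim (fun b => RInt f a b) (Rbar_locally p_infty) (locally l) ->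
  is_RInt_gen f (at_point a) (Rbar_locally p_infty) l.
Proof.
intros Hf Hl P HP.
apply Filter_prod with (fun x => x = a) (fun b => P (RInt f a b)).
- reflexivity.
- exact (Hl P HP).
- intros x b -> Hb. exists (RInt f a b). split; [apply RInt_correct_R, Hf | exact Hb].
Qed.

Lemma is_RInt_gen_m_of_filterlim (f : R -> R) (b l : R) :
  (forall a, ex_RInt f a b) ->
  filterlim (fun a => RInt f a b) (Rbar_locally m_infty) (locally l) ->
  is_RInt_gen f (Rbar_locally m_infty) (at_point b) l.
Proof.
intros Hf Hl P HP.
apply Filter_prod with (fun a => P (RInt f a b)) (fun x => x = b).
- exact (Hl P HP).
- reflexivity.
- intros a x Ha ->. exists (RInt f a b). split; [apply RInt_correct_R, Hf | exact Ha].
Qed.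

Lemma filterlim_of_is_RInt_gen_p (f : R -> R) (a l : R) :
  is_RInt_gen f (at_point a) (Rbar_locally p_infty) l ->
  filterlim (fun b => RInt f a b) (Rbar_locally p_infty) (locally l).
Proof.
intros Hl P HP. destruct (Hl P HP) as [Q R' HQ HR H].
unfold filtermap. apply filter_imp with R'; [|exact HR].
intros b Hb. destruct (H a b HQ Hb) as [y [Hy Py]].
simpl in Hy. rewrite (is_RInt_unique _ _ _ _ Hy). exact Py.
Qed.

Lemma ex_RInt_from_between (f : R -> R) (a b c : R) :
  (forall x, ex_RInt f a x) -> ex_RInt f b c.
Proof. intros Hf. apply ex_RInt_Chasles with a; [apply ex_RInt_swap |]; apply Hf. Qed.

Lemma RInt_from_sub (f : R -> R) (a b c : R) :
  (forall x, ex_RInt f a x) -> RInt f a c - RInt f a b = RInt f b c.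
Proof.
intros Hf. rewrite <- (RInt_Chasles f a b c); [| apply Hf | now apply ex_RInt_from_between with a].
change (RInt f a b + RInt f b c - RInt f a b = RInt f b c). ring.
Qed.

Lemma ex_lim_RInt_p_squeeze (f g h : R -> R) (a lg lh : R) :
  (forall b, ex_RInt f a b) -> (forall b, ex_RInt g a b) -> (forall b, ex_RInt h a b) ->
  (forall x, a <= x -> g x <= f x <= h x) ->
  filterlim (fun b => RInt g a b) (Rbar_locally p_infty) (locally lg) ->
  filterlim (fun b => RInt h a b) (Rbar_locally p_infty) (locally lh) ->
  exists l : R, filterlim (fun b => RInt f a b) (Rbar_locally p_infty) (locally l).
Proof.
intros Hf Hg Hh Hfgh Ig Ih.
assert (Hincr : forall b b', a <= b -> b <= b' ->
  RInt g a b' - RInt g a b <= RInt f a b' - RInt f a b <= RInt h a b' - RInt h a b).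
{ intros b b' Hb Hbb'. rewrite !(RInt_from_sub _ a) by assumption.
  split; apply RInt_le; try (apply ex_RInt_from_between with a; assumption); try assumption;
    intros x Hx; apply Hfgh; lra. }
apply (filterlim_locally_cauchy (U := R_CompleteSpace)). intros eps.
destruct (Ig _ (locally_ball lg (pos_div_2 eps))) as [Bg HBg].
destruct (Ih _ (locally_ball lh (pos_div_2 eps))) as [Bh HBh].
set (B := Rmax a (Rmax Bg Bh)).
assert (HaB : a <= B) by apply Rmax_l.
assert (HgB : Bg <= B) by (eapply Rle_trans; [apply Rmax_l | apply Rmax_r]).
assert (HhB : Bh <= B) by (eapply Rle_trans; [apply Rmax_r | apply Rmax_r]).
assert (Hclose : forall b b', B < b -> b <= b' -> Rabs (RInt f a b' - RInt f a b) < eps).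
{ intros b b' Hb Hbb'.
  assert (Eg := HBg b ltac:(lra)). assert (Eg' := HBg b' ltac:(lra)).
  assert (Eh := HBh b ltac:(lra)). assert (Eh' := HBh b' ltac:(lra)).
  apply Rabs_def2 in Eg, Eg', Eh, Eh'.
  unfold minus, plus, opp in Eg, Eg', Eh, Eh'; simpl in Eg, Eg', Eh, Eh'.
  destruct (Hincr b b') as [H1 H2]; [lra | lra |].
  apply Rabs_def1; lra. }
exists (fun b => B < b). split; [now exists B |].
intros u v Hu Hv. change (Rabs (RInt f a v - RInt f a u) < eps).
destruct (Rle_lt_dec u v).
- now apply Hclose.
- rewrite Rabs_minus_sym. apply Hclose; lra.
Qed.

Lemma is_RInt_gen_p_squeeze (f g h : R -> R) (a lg lh : R) :
  (forall b, ex_RInt f a b) -> (forall b, ex_RInt g a b) -> (forall b, ex_RInt h a b) ->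
  (forall x, a <= x -> g x <= f x <= h x) ->
  is_RInt_gen g (at_point a) (Rbar_locally p_infty) lg ->
  is_RInt_gen h (at_point a) (Rbar_locally p_infty) lh ->
  exists l, is_RInt_gen f (at_point a) (Rbar_locally p_infty) l /\ lg <= l <= lh.
Proof.
intros Hf Hg Hh Hfgh Ig Ih.
apply filterlim_of_is_RInt_gen_p in Ig. apply filterlim_of_is_RInt_gen_p in Ih.
destruct (ex_lim_RInt_p_squeeze f g h a lg lh) as [l Hl]; try assumption.
exists l. split; [now apply is_RInt_gen_p_of_filterlim |].
assert (Hle : forall u v : R -> R, (forall b, ex_RInt u a b) -> (forall b, ex_RInt v a b) ->
  (forall x, a <= x -> u x <= v x) -> Rbar_locally p_infty (fun b => RInt u a b <= RInt v a b)).
{ intros u v Hu Hv Huv. exists a. intros b Hb.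
  apply RInt_le; auto; [lra | intros x Hx; apply Huv; lra]. }
split.
- change (Rbar_le lg l).
  apply (filterlim_le (F := Rbar_locally p_infty) (fun b => RInt g a b) (fun b => RInt f a b));
    [| exact Ig | exact Hl].
  apply Hle; try assumption. intros x Hx. apply (Hfgh x Hx).
- change (Rbar_le l lh).
  apply (filterlim_le (F := Rbar_locally p_infty) (fun b => RInt f a b) (fun b => RInt h a b));
    [| exact Hl | exact Ih].
  apply Hle; try assumption. intros x Hx. apply (Hfgh x Hx).
Qed.

Lemma exp_le_compat x y : x <= y -> exp x <= exp y.
Proof. intros [H | ->]; [left; apply exp_increasing, H | right; reflexivity]. Qed.

(* Coquelicot states many equalities in the carrier of a structure over [R]; [R_eq]
   restates the goal over [R] so that [ring] and [field] recognise it. *)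
Ltac R_eq := match goal with |- ?a = ?b => change (@eq R a b) end.

Lemma sqrt_2PI_pos : 0 < sqrt (2 * PI).
Proof. apply sqrt_lt_R0. generalize PI_RGT_0. lra. Qed.

Lemma npdf_pos t : 0 < npdf t.
Proof. apply Rdiv_lt_0_compat; [apply exp_pos | apply sqrt_2PI_pos]. Qed.

Lemma npdf_continuous t : continuous npdf t.
Proof. apply ex_derive_continuous_R. unfold npdf. auto_derive. exact I. Qed.

Lemma ex_RInt_npdf a b : ex_RInt npdf a b.
Proof. apply ex_RInt_continuous_R. intros; apply npdf_continuous. Qed.

Definition Ncdf0 (x : R) : R := RInt npdf 0 x.

Lemma is_derive_Ncdf0 x : is_derive Ncdf0 x (npdf x).
Proof.
apply is_derive_RInt with 0; [| apply npdf_continuous].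
apply filter_forall. intros b. apply RInt_correct_R, ex_RInt_npdf.
Qed.

Lemma Ncdf0_nonneg x : 0 <= x -> 0 <= Ncdf0 x.
Proof.
intros Hx. apply RInt_ge_0; auto using ex_RInt_npdf. intros t _. left. apply npdf_pos.
Qed.

Lemma Ncdf0_scale x : is_RInt (fun t => x * npdf (x * t)) 0 1 (Ncdf0 x).
Proof.
assert (H := is_RInt_comp_lin npdf x 0 0 1).
rewrite Rmult_0_r, Rmult_1_r, !Rplus_0_r in H.
apply (is_RInt_ext (fun t => scal x (npdf (x * t + 0)))).
- intros t _. now rewrite Rplus_0_r.
- apply H. apply RInt_correct_R, ex_RInt_npdf.
Qed.

Lemma npdf_opp t : npdf (- t) = npdf t.
Proof. unfold npdf. now replace ((- t) ^ 2) with (t ^ 2) by ring. Qed.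

Lemma Ncdf0_opp x : Ncdf0 (- x) = - Ncdf0 x.
Proof.
rewrite <- (is_RInt_unique _ _ _ _ (Ncdf0_scale (- x))).
apply is_RInt_unique, (is_RInt_ext (fun t => opp (x * npdf (x * t)))).
- intros t _. replace (- x * t) with (- (x * t)) by ring. rewrite npdf_opp.
  change (- (x * npdf (x * t)) = - x * npdf (x * t)). ring.
- apply (is_RInt_opp (V := R_NormedModule)), Ncdf0_scale.
Qed.

Definition owen_integrand (x t : R) : R := exp (- (x ^ 2 * (1 + t ^ 2)) / 2) / (1 + t ^ 2).

Definition owenT (x : R) : R := / (2 * PI) * RInt (owen_integrand x) 0 1.

Lemma is_derive_owen_integrand x t :
  is_derive (fun u => owen_integrand u t) x (- x * exp (- (x ^ 2 * (1 + t ^ 2)) / 2)).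
Proof.
unfold owen_integrand. assert (0 < 1 + t ^ 2) by nra.
auto_derive; [exact I |].
replace (- (x * (x * 1) * (1 + t * (t * 1))) * / 2) with (- (x ^ 2 * (1 + t ^ 2)) / 2)
  by (unfold Rdiv; ring).
field. lra.
Qed.

Lemma owen_integrand_continuous x t : continuous (owen_integrand x) t.
Proof.
apply ex_derive_continuous_R. unfold owen_integrand. assert (0 < 1 + t ^ 2) by nra.
auto_derive. lra.
Qed.

Lemma is_derive_RInt_owen_integrand x :
  is_derive (fun u => RInt (owen_integrand u) 0 1) x
    (RInt (fun t => - x * exp (- (x ^ 2 * (1 + t ^ 2)) / 2)) 0 1).
Proof.
rewrite (RInt_ext _ (fun t => Derive (fun u => owen_integrand u t) x)).
2: { intros t _. symmetry. apply is_derive_unique, is_derive_owen_integrand. }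
apply (is_derive_RInt_param owen_integrand).
- apply filter_forall. intros u t _. eexists. apply is_derive_owen_integrand.
- intros t _.
  apply continuity_2d_pt_ext with (fun u v => - u * exp (- (u * u * (1 + v * v)) * / 2)).
  { intros u v. symmetry. apply is_derive_unique.
    replace (- (u * u * (1 + v * v)) * / 2) with (- (u ^ 2 * (1 + v ^ 2)) / 2)
      by (unfold Rdiv; ring).
    apply is_derive_owen_integrand. }
  repeat first [ apply continuity_2d_pt_mult | apply continuity_2d_pt_plus
               | apply continuity_2d_pt_opp | apply continuity_2d_pt_id1
               | apply continuity_2d_pt_id2 | apply continuity_2d_pt_const
               | apply continuity_1d_2d_pt_comp
               | apply derivable_continuous_pt, derivable_pt_exp ].
- apply filter_forall. intros u.
  apply ex_RInt_continuous_R. intros; apply owen_integrand_continuous.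
Qed.

Lemma RInt_owen_integrand_dx x :
  RInt (fun t => - x * exp (- (x ^ 2 * (1 + t ^ 2)) / 2)) 0 1 = - (2 * PI) * npdf x * Ncdf0 x.
Proof.
assert (Hsq := sqrt_2PI_pos). assert (H2PI := sqrt_sqrt (2 * PI) ltac:(generalize PI_RGT_0; lra)).
apply is_RInt_unique.
apply (is_RInt_ext (fun t => scal (- (2 * PI) * npdf x) (x * npdf (x * t)))).
- intros t _. change (scal ?k ?y) with (k * y). unfold npdf.
  replace (- (x ^ 2 * (1 + t ^ 2)) / 2) with (- x ^ 2 / 2 + - (x * t) ^ 2 / 2) by field.
  replace (- (2 * PI)) with (- (sqrt (2 * PI) * sqrt (2 * PI))) by (rewrite H2PI; ring).
  rewrite exp_plus. R_eq. field. lra.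
- apply (is_RInt_scal (V := R_NormedModule)), Ncdf0_scale.
Qed.

Lemma is_derive_owenT x : is_derive owenT x (- npdf x * Ncdf0 x).
Proof.
assert (H := is_derive_scal _ _ (/ (2 * PI)) _ (is_derive_RInt_owen_integrand x)).
rewrite RInt_owen_integrand_dx in H.
replace (- npdf x * Ncdf0 x) with (/ (2 * PI) * (- (2 * PI) * npdf x * Ncdf0 x)).
- exact H.
- field. generalize PI_RGT_0. lra.
Qed.

Lemma owenT_0 : owenT 0 = / 8.
Proof.
assert (HPI := PI_RGT_0).
assert (H : is_RInt (fun t => / (1 + t²)) 0 1 (atan 1 - atan 0)).
{ apply (is_RInt_derive atan); intros t _; [apply is_derive_atan |].
  apply ex_derive_continuous_R. assert (0 < 1 + t²) by (unfold Rsqr; nra).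
  auto_derive. unfold Rsqr in *. lra. }
rewrite atan_1, atan_0 in H.
unfold owenT. rewrite (RInt_ext _ (fun t => / (1 + t²))), (is_RInt_unique _ _ _ _ H).
- field. lra.
- intros t _. unfold owen_integrand, Rsqr. rewrite pow_i, Rmult_0_l by lia.
  replace (- 0 / 2) with 0 by field. rewrite exp_0. R_eq. field. nra.
Qed.

Lemma Ncdf0_sqr_add_owenT x : Ncdf0 x ^ 2 + 2 * owenT x = / 4.
Proof.
set (h y := Ncdf0 y ^ 2 + 2 * owenT y).
assert (Hh : forall y, is_derive h y 0).
{ intros y. unfold h. 
  replace 0 with (INR 2 * npdf y * Ncdf0 y ^ Init.Nat.pred 2 + 2 * (- npdf y * Ncdf0 y))
    by (simpl; ring).
  apply (is_derive_plus (fun y => Ncdf0 y ^ 2)).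
  - apply is_derive_pow, is_derive_Ncdf0.
  - apply is_derive_scal, is_derive_owenT. }
destruct (MVT_gen h 0 x (fun _ => 0)) as [c [_ Hc]].
- intros; apply Hh.
- intros y _. apply continuity_pt_filterlim, ex_derive_continuous_R. eexists. apply Hh.
- assert (Hh0 : h 0 = / 4).
  { unfold h, Ncdf0. rewrite RInt_point, owenT_0. change (zero : R) with 0. field. }
  fold (h x). lra.
Qed.

Lemma owenT_bounds x : 0 <= owenT x <= exp (- x ^ 2 / 2) / (2 * PI).
Proof.
assert (HPI := PI_RGT_0).
assert (Hex : ex_RInt (owen_integrand x) 0 1).
{ apply ex_RInt_continuous_R. intros; apply owen_integrand_continuous. }
assert (Hpt : forall t, 0 < owen_integrand x t <= exp (- x ^ 2 / 2)).
{ intros t. unfold owen_integrand. assert (Ht : 1 <= 1 + t ^ 2) by nra.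
  assert (He : exp (- (x ^ 2 * (1 + t ^ 2)) / 2) <= exp (- x ^ 2 / 2))
    by (apply exp_le_compat; nra).
  assert (Hpos := exp_pos (- (x ^ 2 * (1 + t ^ 2)) / 2)).
  split; [apply Rdiv_lt_0_compat; lra |].
  apply Rle_trans with (exp (- (x ^ 2 * (1 + t ^ 2)) / 2)); [| exact He].
  apply Rmult_le_reg_r with (1 + t ^ 2); [lra |]. field_simplify; nra. }
assert (Hle : RInt (owen_integrand x) 0 1 <= exp (- x ^ 2 / 2)).
{ eapply Rle_trans.
  - apply (RInt_le _ (fun _ => exp (- x ^ 2 / 2))); auto; [lra | apply ex_RInt_const |].
    intros; apply Hpt.
  - rewrite RInt_const. change (scal ?k ?y) with (k * y). lra. }
assert (Hge : 0 <= RInt (owen_integrand x) 0 1).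
{ apply RInt_ge_0; auto; [lra | intros t _; left; apply Hpt]. }
assert (Hinv : 0 < / (2 * PI)) by (apply Rinv_0_lt_compat; lra).
unfold owenT, Rdiv. rewrite (Rmult_comm (exp _)). split; nra.
Qed.

Lemma Rabs_Ncdf0_le x : Rabs (Ncdf0 x) <= / 2.
Proof.
assert (H := Ncdf0_sqr_add_owenT x). assert (HT := owenT_bounds x).
apply Rabs_le. split; nra.
Qed.

Lemma is_lim_exp_neg_sqr : is_lim (fun x => exp (- x ^ 2 / 2)) p_infty 0.
Proof.
apply (is_lim_comp exp (fun x => - x ^ 2 / 2) p_infty 0 m_infty);
  [exact is_lim_exp_m | | now exists 0].
apply (is_lim_le_m_loc (fun x => - x)); [exists 2; intros x Hx; nra |].
apply (is_lim_opp (fun x => x) p_infty p_infty), is_lim_id.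
Qed.

Lemma is_lim_Ncdf0 : is_lim Ncdf0 p_infty (/ 2).
Proof.
apply (is_lim_le_le_loc (fun x => / 2 - 4 / (2 * PI) * exp (- x ^ 2 / 2)) (fun _ => / 2)).
- exists 0. intros x Hx.
  assert (H := Ncdf0_sqr_add_owenT x). assert (HT := owenT_bounds x).
  assert (HG := Ncdf0_nonneg x ltac:(lra)). assert (HG' := Rabs_Ncdf0_le x).
  rewrite Rabs_right in HG' by lra.
  unfold Rdiv in *. nra.
- assert (H := is_lim_scal_l _ (4 / (2 * PI)) _ _ is_lim_exp_neg_sqr). simpl in H.
  apply (is_lim_minus' _ _ _ _ _ (is_lim_const (/ 2) p_infty)) in H.
  now rewrite Rmult_0_r, Rminus_0_r in H.
- apply is_lim_const.
Qed.

Lemma is_lim_Ncdf0_opp : is_lim (fun x => Ncdf0 (- x)) m_infty (/ 2).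
Proof.
apply (is_lim_comp Ncdf0 (fun x => - x) m_infty (/ 2) p_infty);
  [apply is_lim_Ncdf0 | | now exists 0].
apply (is_lim_opp (fun x => x) m_infty m_infty), is_lim_id.
Qed.

Lemma Ncdf_eq x : Ncdf x = / 2 + Ncdf0 x.
Proof.
assert (Hleft : is_RInt_gen npdf (Rbar_locally m_infty) (at_point 0) (/ 2)).
{ apply is_RInt_gen_m_of_filterlim; [intros; apply ex_RInt_npdf |].
  change (is_lim (fun a => RInt npdf a 0) m_infty (/ 2)).
  apply (is_lim_ext (fun a => Ncdf0 (- a))); [| apply is_lim_Ncdf0_opp].
  intros a. rewrite Ncdf0_opp. unfold Ncdf0.
  rewrite <- (opp_RInt_swap npdf 0 a) by apply ex_RInt_npdf. reflexivity. }
apply is_RInt_gen_unique. change (/ 2 + Ncdf0 x) with (plus (/ 2) (Ncdf0 x)).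
apply (is_RInt_gen_Chasles _ 0 _ _ Hleft).
apply is_RInt_gen_at_point, RInt_correct_R, ex_RInt_npdf.
Qed.

Lemma is_derive_Ncdf x : is_derive Ncdf x (npdf x).
Proof.
apply (is_derive_ext (fun y => / 2 + Ncdf0 y)); [intros; now rewrite Ncdf_eq |].
assert (H := is_derive_plus _ _ x _ _ (is_derive_const (/ 2) x) (is_derive_Ncdf0 x)).
rewrite plus_zero_l in H. exact H.
Qed.

Lemma Ncdf_bounds x : 0 <= Ncdf x <= 1.
Proof.
rewrite Ncdf_eq. assert (H := Rabs_Ncdf0_le x). apply Rabs_le_between in H. lra.
Qed.

Lemma is_lim_Ncdf_p : is_lim Ncdf p_infty 1.
Proof.
apply (is_lim_ext (fun x => / 2 + Ncdf0 x)); [intros; now rewrite Ncdf_eq |].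
replace 1 with (/ 2 + / 2) by field.
apply is_lim_plus'; [apply is_lim_const | apply is_lim_Ncdf0].
Qed.

Lemma is_lim_Ncdf_m : is_lim Ncdf m_infty 0.
Proof.
apply (is_lim_ext (fun x => / 2 - Ncdf0 (- x))).
{ intros x. rewrite Ncdf_eq, Ncdf0_opp. ring. }
replace 0 with (/ 2 - / 2) by field.
apply is_lim_minus'; [apply is_lim_const | apply is_lim_Ncdf0_opp].
Qed.

Lemma npdf_shift t c : npdf (t - c) = npdf t * exp (c * t - c ^ 2 / 2).
Proof.
unfold npdf. replace (- (t - c) ^ 2 / 2) with (- t ^ 2 / 2 + (c * t - c ^ 2 / 2)) by field.
rewrite exp_plus. assert (H := sqrt_2PI_pos). field. lra.
Qed.

Lemma is_lim_sub_const (x : Rbar) c : is_lim (fun t => t - c) x (Rbar_minus x c).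
Proof.
apply (is_lim_plus _ _ x x (- c)); [apply is_lim_id | apply is_lim_const |].
apply Rbar_plus_correct. now destruct x.
Qed.

Section CallPrice.

Variables K D sigma r tau T : R.
Hypotheses (HK : 0 < K) (Hsigma : 0 < sigma) (HtauT : tau < T).

Local Notation V := (Vtau K D sigma r tau T).
Local Notation d := (dfun K D sigma r tau T).
Local Notation Kd := (K * exp (- r * (T - tau))).
Local Notation w := (sigma * sqrt (T - tau)).

Definition Vtau_minorant (t u : R) : R := (u - D) * Ncdf t - Kd * Ncdf (t - w).

Lemma Vtau_gt_D u : D < u -> V u = Vtau_minorant (d u) u.
Proof. intros Hu. unfold Vtau. now destruct (Rlt_dec D u). Qed.

Lemma Vtau_le_D u : u <= D -> V u = 0.
Proof. intros Hu. unfold Vtau. destruct (Rlt_dec D u); [lra | reflexivity]. Qed.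

Lemma Kd_pos : 0 < Kd.
Proof. apply Rmult_lt_0_compat; [exact HK | apply exp_pos]. Qed.

Lemma w_pos : 0 < w.
Proof. apply Rmult_lt_0_compat; [exact Hsigma | apply sqrt_lt_R0; lra]. Qed.

Lemma Kd_npdf_eq u t : D < u ->
  Kd * npdf (t - w) = (u - D) * npdf t * exp (w * (t - d u)).
Proof.
intros Hu. assert (Hw := w_pos). assert (Hq : 0 < sqrt (T - tau)) by (apply sqrt_lt_R0; lra).
assert (Hwd : w * d u = ln (u - D) - ln K + (r + sigma ^ 2 / 2) * (T - tau)).
{ unfold dfun. field. lra. }
assert (Hw2 : w ^ 2 = sigma ^ 2 * (T - tau)).
{ rewrite Rpow_mult_distr, pow2_sqrt; lra. }
rewrite npdf_shift, <- (exp_ln K) at 1 by exact HK. rewrite <- (exp_ln (u - D)) at 1 by lra.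
replace (exp (ln K) * exp (- r * (T - tau)) * (npdf t * exp (w * t - w ^ 2 / 2)))
  with (npdf t * exp (ln K + - r * (T - tau) + (w * t - w ^ 2 / 2))) by (rewrite !exp_plus; ring).
replace (exp (ln (u - D)) * npdf t * exp (w * (t - d u)))
  with (npdf t * exp (ln (u - D) + w * (t - d u))) by (rewrite exp_plus; ring).
do 2 f_equal. rewrite Hw2. replace (w * (t - d u)) with (w * t - w * d u) by ring.
rewrite Hwd. field.
Qed.

Lemma is_derive_Vtau_minorant u t :
  is_derive (fun t => Vtau_minorant t u) t ((u - D) * npdf t - Kd * npdf (t - w)).
Proof.
unfold Vtau_minorant.
apply (is_derive_minus (fun t => (u - D) * Ncdf t) (fun t => Kd * Ncdf (t - w))).
- apply is_derive_scal, is_derive_Ncdf.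
- apply is_derive_scal. rewrite <- (Rmult_1_l (npdf (t - w))).
  apply (is_derive_comp Ncdf (fun t => t - w)); [apply is_derive_Ncdf |].
  auto_derive; [exact I | ring].
Qed.

(* By [Kd_npdf_eq] the t-derivative is (u - D) npdf t (1 - exp (w (t - d u))), which is
   nonnegative before [d u] and nonpositive after it. *)
Lemma Vtau_minorant_le_at_d u t : D < u -> Vtau_minorant t u <= Vtau_minorant (d u) u.
Proof.
intros Hu. assert (Hw := w_pos).
destruct (MVT_gen (fun t => Vtau_minorant t u) t (d u)
            (fun c => (u - D) * npdf c - Kd * npdf (c - w))) as [c [Hc Hmvt]].
- intros x _. apply (is_derive_Vtau_minorant u x).
- intros x _. apply continuity_pt_filterlim, (ex_derive_continuous_R (fun t => Vtau_minorant t u)).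
  eexists. apply (is_derive_Vtau_minorant u x).
- rewrite (Kd_npdf_eq u c Hu) in Hmvt.
  assert (Hsign : 0 <= (1 - exp (w * (c - d u))) * (d u - t)).
  { destruct (Rle_lt_dec t (d u)).
    - rewrite Rmin_left, Rmax_right in Hc by lra.
      assert (exp (w * (c - d u)) <= 1) by (rewrite <- exp_0; apply exp_le_compat; nra).
      nra.
    - rewrite Rmin_right, Rmax_left in Hc by lra.
      assert (1 <= exp (w * (c - d u))) by (rewrite <- exp_0; apply exp_le_compat; nra).
      nra. }
  assert (Hn := npdf_pos c).
  assert (0 <= (u - D) * npdf c * ((1 - exp (w * (c - d u))) * (d u - t)))
    by (apply Rmult_le_pos; [apply Rmult_le_pos |]; lra).
  nra.
Qed.

Lemma Vtau_ge_minorant t u : Vtau_minorant t u <= V u.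
Proof.
destruct (Rlt_le_dec D u) as [Hu | Hu].
- rewrite Vtau_gt_D by exact Hu. now apply Vtau_minorant_le_at_d.
- rewrite Vtau_le_D by exact Hu. unfold Vtau_minorant.
  assert (H1 := Ncdf_bounds t). assert (H2 := Ncdf_bounds (t - w)). assert (H3 := Kd_pos).
  nra.
Qed.

Lemma Vtau_ge_lim_minorant (x : Rbar) (l : R) u :
  is_lim (fun t => Vtau_minorant t u) x l -> l <= V u.
Proof.
intros Hl. change (Rbar_le l (V u)).
apply (is_lim_le_loc (fun t => Vtau_minorant t u) (fun _ => V u) x);
  [| exact Hl | apply is_lim_const].
apply filter_forall. intros; apply Vtau_ge_minorant.
Qed.

Lemma is_lim_Vtau_minorant (x : Rbar) (l : R) u :
  (x = p_infty \/ x = m_infty) -> is_lim Ncdf x l ->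
  is_lim (fun t => Vtau_minorant t u) x ((u - D) * l - Kd * l).
Proof.
intros Hx Hl. unfold Vtau_minorant.
apply is_lim_minus'; apply (is_lim_scal_l _ _ _ l).
- exact Hl.
- apply (is_lim_comp Ncdf (fun t => t - w) x l x); [exact Hl | |].
  + replace x with (Rbar_minus x w) at 2 by (now destruct Hx as [-> | ->]). apply is_lim_sub_const.
  + destruct Hx as [-> | ->]; exists 0; intros; discriminate.
Qed.

Lemma Vtau_nonneg u : 0 <= V u.
Proof.
replace 0 with ((u - D) * 0 - Kd * 0) by ring.
apply (Vtau_ge_lim_minorant m_infty), is_lim_Vtau_minorant; [now right | apply is_lim_Ncdf_m].
Qed.

Lemma Vtau_ge_forward u : u - D - Kd <= V u.
Proof.
replace (u - D - Kd) with ((u - D) * 1 - Kd * 1) by ring.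
apply (Vtau_ge_lim_minorant p_infty), is_lim_Vtau_minorant; [now left | apply is_lim_Ncdf_p].
Qed.

Lemma Vtau_le_chord a b u : a <= u <= b ->
  (b - a) * V u <= (b - u) * V a + (u - a) * V b.
Proof.
intros Hu.
destruct (Rlt_le_dec D u) as [HDu | HDu].
- rewrite (Vtau_gt_D u HDu).
  replace ((b - a) * Vtau_minorant (d u) u)
    with ((b - u) * Vtau_minorant (d u) a + (u - a) * Vtau_minorant (d u) b)
    by (unfold Vtau_minorant; ring).
  apply Rplus_le_compat; apply Rmult_le_compat_l; try lra; apply Vtau_ge_minorant.
- rewrite (Vtau_le_D u HDu).
  assert (Ha := Vtau_nonneg a). assert (Hb := Vtau_nonneg b).
  nra.
Qed.

Lemma Vtau_nondecreasing a b : a <= b -> V a <= V b.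
Proof.
intros Hab.
destruct (Rlt_le_dec D a) as [Ha | Ha]; [| rewrite Vtau_le_D by exact Ha; apply Vtau_nonneg].
rewrite Vtau_gt_D by exact Ha.
eapply Rle_trans; [| apply (Vtau_ge_minorant (d a))].
unfold Vtau_minorant. assert (H := Ncdf_bounds (d a)). nra.
Qed.

Lemma Vtau_increment_le a b : a <= b -> V b - V a <= b - a.
Proof.
intros Hab.
destruct (Rlt_le_dec D b) as [Hb | Hb].
- rewrite Vtau_gt_D by exact Hb.
  assert (Ha := Vtau_ge_minorant (d b) a). assert (H := Ncdf_bounds (d b)).
  unfold Vtau_minorant in *. nra.
- rewrite !Vtau_le_D by lra. lra.
Qed.

Lemma Vtau_continuous u : continuous V u.
Proof.
intros P [eps HP]. exists eps. intros y Hy. apply HP.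
change (Rabs (V y - V u) < eps). change (Rabs (y - u) < eps) in Hy.
eapply Rle_lt_trans; [| exact Hy].
destruct (Rle_lt_dec u y) as [Huy | Huy].
- assert (H1 := Vtau_nondecreasing u y Huy). assert (H2 := Vtau_increment_le u y Huy).
  rewrite !Rabs_right by lra. lra.
- assert (H1 := Vtau_nondecreasing y u (Rlt_le _ _ Huy)).
  assert (H2 := Vtau_increment_le y u (Rlt_le _ _ Huy)).
  rewrite !Rabs_left1 by lra. lra.
Qed.

Lemma Vtau'_eq_Ncdf m : D < m -> Vtau' K D sigma r tau T m = Ncdf (d m).
Proof.
intros Hm.
assert (Hk := Kd_npdf_eq m (d m) Hm).
rewrite Rminus_diag, Rmult_0_r, exp_0, Rmult_1_r in Hk. unfold npdf in Hk.
assert (Hsq := sqrt_2PI_pos).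
assert (Hexp : Kd * exp (- (d m - w) ^ 2 / 2) = (m - D) * exp (- d m ^ 2 / 2)).
{ apply Rmult_eq_reg_r with (/ sqrt (2 * PI)); [| apply Rinv_neq_0_compat; lra].
  unfold Rdiv in Hk. rewrite !Rmult_assoc in *. exact Hk. }
assert (Hq : 0 < sqrt (2 * PI * (T - tau))) by (apply sqrt_lt_R0; generalize PI_RGT_0; nra).
unfold Vtau'. cbv zeta. rewrite Hexp. field. repeat split; lra.
Qed.

Lemma Vtau_ge_tangent m u : D < m ->
  Vtau' K D sigma r tau T m * u + (V m - Vtau' K D sigma r tau T m * m) <= V u.
Proof.
intros Hm. rewrite Vtau'_eq_Ncdf, Vtau_gt_D by exact Hm.
eapply Rle_trans; [| apply (Vtau_ge_minorant (d m))].
unfold Vtau_minorant. lra.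
Qed.

End CallPrice.

Section LognormalIntegrals.

Variables sigma r tau S : R.
Hypotheses (Hsigma : 0 < sigma) (Htau : 0 < tau) (HS : 0 < S).

Local Notation v := (sigma * sqrt tau).
Local Notation d := (dgen sigma r tau S).

(* [exp (- r tau)] times the risk-neutral density of [ln S_tau] when [S_0 = S]. *)
Definition disc_density (y : R) : R :=
  exp (- r * tau) / (sigma * sqrt (2 * PI * tau))
  * exp (- (ln S + (r - sigma ^ 2 / 2) * tau - y) ^ 2 / (2 * sigma ^ 2 * tau)).

Definition affine_primitive (p q y : R) : R :=
  - (p * S * Ncdf (d (exp y)) + q * exp (- r * tau) * Ncdf (d (exp y) - v)).

Lemma v_pos : 0 < v.
Proof. apply Rmult_lt_0_compat; [exact Hsigma | apply sqrt_lt_R0, Htau]. Qed.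

Lemma disc_density_eq y : disc_density y = exp (- r * tau) * npdf (d (exp y) - v) / v.
Proof.
assert (Hsq := sqrt_2PI_pos).
unfold disc_density, npdf, dgen. rewrite ln_exp, sqrt_mult by (generalize PI_RGT_0; lra).
assert (Hq := sqrt_lt_R0 _ Htau). assert (Hqq := sqrt_sqrt tau (Rlt_le _ _ Htau)).
set (q := sqrt tau) in *. clearbody q. subst tau.
replace (- ((ln S - y + (r + sigma ^ 2 / 2) * (q * q)) / (sigma * q) - sigma * q) ^ 2 / 2)
  with (- (ln S + (r - sigma ^ 2 / 2) * (q * q) - y) ^ 2 / (2 * sigma ^ 2 * (q * q)))
  by (field; lra).
field. repeat split; lra.
Qed.

Lemma S_npdf_eq y : S * npdf (d (exp y)) = exp (- r * tau) * exp y * npdf (d (exp y) - v).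
Proof.
assert (Hv := v_pos). assert (Hst := sqrt_lt_R0 _ Htau).
assert (Hv2 : v ^ 2 = sigma ^ 2 * tau) by (rewrite Rpow_mult_distr, pow2_sqrt; lra).
rewrite npdf_shift.
replace (v * d (exp y) - v ^ 2 / 2) with (ln S - y + r * tau).
- replace (- r * tau) with (- (r * tau)) by ring.
  unfold Rminus. rewrite !exp_plus, exp_ln, !exp_Ropp by exact HS.
  assert (Hy := exp_pos y). assert (Hr := exp_pos (r * tau)). field. lra.
- unfold dgen. rewrite ln_exp, Hv2. field. lra.
Qed.

Lemma is_derive_Ncdf_d (c y : R) :
  is_derive (fun y => Ncdf (d (exp y) - c)) y (- npdf (d (exp y) - c) / v).
Proof.
assert (Hv := v_pos). assert (Hst := sqrt_lt_R0 _ Htau).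
apply (is_derive_ext (fun y => Ncdf ((ln S - y + (r + sigma ^ 2 / 2) * tau) / v - c))).
{ intros z. unfold dgen. now rewrite ln_exp. }
replace (- npdf (d (exp y) - c) / v)
  with (- / v * npdf ((ln S - y + (r + sigma ^ 2 / 2) * tau) / v - c)).
- apply (is_derive_comp Ncdf); [apply is_derive_Ncdf |].
  auto_derive; [exact I | ring].
- unfold dgen. rewrite ln_exp. field. repeat split; lra.
Qed.

Lemma is_derive_affine_primitive (p q y : R) :
  is_derive (affine_primitive p q) y ((p * exp y + q) * disc_density y).
Proof.
assert (Hv := v_pos). assert (Hst := sqrt_lt_R0 _ Htau).
assert (H0 := is_derive_Ncdf_d 0 y). rewrite Rminus_0_r in H0.
assert (Hv' := is_derive_Ncdf_d v y).
replace ((p * exp y + q) * disc_density y)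
  with (- (p * S * (- npdf (d (exp y)) / v) + q * exp (- r * tau) * (- npdf (d (exp y) - v) / v))).
- apply (is_derive_opp
           (fun y => p * S * Ncdf (d (exp y)) + q * exp (- r * tau) * Ncdf (d (exp y) - v))).
  apply (is_derive_plus (fun y => p * S * Ncdf (d (exp y)))); apply is_derive_scal.
  + eapply is_derive_ext; [| exact H0]. intros z. cbv beta. f_equal. ring.
  + exact Hv'.
- rewrite disc_density_eq.
  replace (p * S * (- npdf (d (exp y)) / v)) with (- p * (S * npdf (d (exp y))) / v)
    by (field; repeat split; lra).
  rewrite S_npdf_eq. field. repeat split; lra.
Qed.

Lemma disc_density_continuous y : continuous disc_density y.
Proof. apply ex_derive_continuous_R. unfold disc_density. auto_derive. exact I. Qed.

Lemma disc_density_pos y : 0 < disc_density y.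
Proof.
apply Rmult_lt_0_compat; [| apply exp_pos].
apply Rdiv_lt_0_compat; [apply exp_pos |].
apply Rmult_lt_0_compat; [exact Hsigma | apply sqrt_lt_R0; generalize PI_RGT_0; nra].
Qed.

Lemma affine_primitive_ln p q X : 0 < X ->
  affine_primitive p q (ln X) = - (p * S * Ncdf (d X) + q * exp (- r * tau) * Ncdf (d X - v)).
Proof. intros HX. unfold affine_primitive. now rewrite exp_ln. Qed.

Lemma is_RInt_affine_disc_density (p q y0 y1 : R) :
  is_RInt (fun y => (p * exp y + q) * disc_density y) y0 y1
    (affine_primitive p q y1 - affine_primitive p q y0).
Proof.
apply (is_RInt_derive (affine_primitive p q)); intros; [apply is_derive_affine_primitive |].
apply (continuous_mult (fun y => p * exp y + q)); [| apply disc_density_continuous].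
apply ex_derive_continuous_R. auto_derive. exact I.
Qed.

Lemma is_lim_affine_primitive p q : is_lim (affine_primitive p q) p_infty 0.
Proof.
assert (Hv := v_pos).
assert (Hd : is_lim (fun y => d (exp y)) p_infty m_infty).
{ intros P [M HM]. exists (ln S + (r + sigma ^ 2 / 2) * tau - M * v). intros y Hy. apply HM.
  unfold dgen. rewrite ln_exp. apply Rmult_lt_reg_r with v; [exact Hv |].
  unfold Rdiv. rewrite Rmult_assoc, Rinv_l; lra. }
assert (HN : forall c, is_lim (fun y => Ncdf (d (exp y) - c)) p_infty 0).
{ intros c. apply (is_lim_comp Ncdf _ _ _ m_infty); [apply is_lim_Ncdf_m | | now exists 0].
  apply (is_lim_comp (fun t => t - c) _ _ _ m_infty);
    [apply (is_lim_sub_const m_infty) | exact Hd |].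
  now exists 0. }
replace 0 with (- (p * S * 0 + q * exp (- r * tau) * 0)) by ring.
apply (is_lim_opp (fun y => p * S * Ncdf (d (exp y)) + q * exp (- r * tau) * Ncdf (d (exp y) - v))
         _ (Finite _)).
apply is_lim_plus'; apply (is_lim_scal_l _ _ _ 0); [| apply HN].
apply (is_lim_ext (fun y => Ncdf (d (exp y) - 0))); [intros; now rewrite Rminus_0_r | apply HN].
Qed.

Lemma ex_RInt_affine_disc_density (p q y0 y1 : R) :
  ex_RInt (fun y => (p * exp y + q) * disc_density y) y0 y1.
Proof. eexists. apply is_RInt_affine_disc_density. Qed.

Lemma is_RInt_gen_affine_disc_density (p q y0 : R) :
  is_RInt_gen (fun y => (p * exp y + q) * disc_density y) (at_point y0) (Rbar_locally p_infty)
    (- affine_primitive p q y0).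
Proof.
apply is_RInt_gen_p_of_filterlim.
- intros y1. apply ex_RInt_affine_disc_density.
- change (is_lim (fun y1 => RInt (fun y => (p * exp y + q) * disc_density y) y0 y1) p_infty
            (- affine_primitive p q y0)).
  apply (is_lim_ext (fun y1 => affine_primitive p q y1 - affine_primitive p q y0)).
  { intros y1. symmetry. apply is_RInt_unique, is_RInt_affine_disc_density. }
  rewrite <- Rminus_0_l. apply is_lim_minus'; [apply is_lim_affine_primitive | apply is_lim_const].
Qed.

End LognormalIntegrals.

Lemma sum_n_m_le_loc (a b : nat -> R) (n m : nat) :
  (forall k, (n <= k <= m)%nat -> a k <= b k) -> sum_n_m a n m <= sum_n_m b n m.
Proof.
intros Hab. apply Rle_trans with (sum_n_m (fun k => Rmax (a k) (b k)) n m).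
- apply sum_n_m_le. intros; apply Rmax_l.
- right. apply sum_n_m_ext_loc. intros k Hk. now apply Rmax_right, Hab.
Qed.

Lemma RInt_Chasles_sum_n_m (f : R -> R) (x : nat -> R) (m : nat) :
  (forall a b, ex_RInt f a b) -> (1 <= m)%nat ->
  RInt f (x 0%nat) (x m) = sum_n_m (fun i => RInt f (x (i - 1)%nat) (x i)) 1 m.
Proof.
intros Hf Hm. induction m as [| m IH]; [lia |].
destruct (Nat.eq_dec m 0) as [-> | Hm0]; [now rewrite sum_n_n |].
rewrite sum_n_Sm, <- IH, Nat.sub_succ, Nat.sub_0_r by lia.
symmetry. apply RInt_Chasles; apply Hf.
Qed.

Lemma sum_n_m_scal_plus (c1 c2 : R) (u1 u2 : nat -> R) (n m : nat) :
  c1 * sum_n_m u1 n m + c2 * sum_n_m u2 n m = sum_n_m (fun k => c1 * u1 k + c2 * u2 k) n m.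
Proof.
rewrite (sum_n_m_plus (G := R_AbelianMonoid)).
now rewrite <- !(sum_n_m_mult_l (K := R_Ring)).
Qed.

Lemma Sgrid_0 D Sstar M : Sgrid D Sstar M 0 = D.
Proof. unfold Sgrid. simpl. ring. Qed.

Lemma Sgrid_M D Sstar M : (1 <= M)%nat -> Sgrid D Sstar M M = Sstar.
Proof. intros HM. unfold Sgrid. field. apply not_0_INR. lia. Qed.

Lemma Sgrid_step D Sstar M i : (1 <= i)%nat ->
  Sgrid D Sstar M i - Sgrid D Sstar M (i - 1) = (Sstar - D) / INR M.
Proof. intros Hi. unfold Sgrid. rewrite minus_INR by exact Hi. simpl. ring. Qed.

Lemma Sgrid_ge D Sstar M i : D < Sstar -> D <= Sgrid D Sstar M i.
Proof.
intros HDS. unfold Sgrid.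
assert (0 <= (Sstar - D) / INR M * INR i); [| lra].
apply Rmult_le_pos; [| apply pos_INR].
destruct M as [| M]; [simpl; unfold Rdiv; rewrite Rinv_0; lra |].
apply Rlt_le, Rdiv_lt_0_compat; [lra | apply lt_0_INR; lia].
Qed.

Section PriceBounds.

Variables K D sigma r tau T S : R.
Hypotheses (HK : 0 < K) (Hsigma : 0 < sigma) (Htau : 0 < tau) (HtauT : tau < T) (HS : 0 < S).

Local Notation V := (Vtau K D sigma r tau T).
Local Notation d := (dgen sigma r tau S).
Local Notation v := (sigma * sqrt tau).
Local Notation disc := (exp (- r * tau)).

Definition V0_integrand (y : R) : R := V (exp y) * disc_density sigma r tau S y.

Lemma V0_integrand_continuous y : continuous V0_integrand y.
Proof.
apply (continuous_mult (fun y => V (exp y))); [| apply disc_density_continuous].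
apply (continuous_comp exp V); [apply ex_derive_continuous_R; auto_derive; exact I |].
now apply Vtau_continuous.
Qed.

Lemma ex_RInt_V0_integrand a b : ex_RInt V0_integrand a b.
Proof. apply ex_RInt_continuous_R. intros; apply V0_integrand_continuous. Qed.

Lemma V0_eq_of_is_RInt_gen J :
  is_RInt_gen V0_integrand (Rbar_locally m_infty) (Rbar_locally p_infty) J ->
  V0 K D sigma r tau T S = J.
Proof.
intros HJ.
set (c := exp (- r * tau) / (sigma * sqrt (2 * PI * tau))).
assert (Hc : 0 < c) by (unfold c; apply Rdiv_lt_0_compat; [apply exp_pos |];
  apply Rmult_lt_0_compat; [exact Hsigma | apply sqrt_lt_R0; generalize PI_RGT_0; nra]).
apply (is_RInt_gen_scal _ (/ c)) in HJ.
unfold V0. cbv zeta. fold c.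
rewrite (is_RInt_gen_unique _ (/ c * J)).
- field. lra.
- eapply is_RInt_gen_ext; [| exact HJ].
  apply filter_forall. intros ab y _.
  unfold V0_integrand, disc_density. fold c. change (scal ?k ?z) with (k * z). R_eq. field. lra.
Qed.

Lemma is_RInt_gen_V0_integrand_le_D : 0 < D ->
  is_RInt_gen V0_integrand (Rbar_locally m_infty) (at_point (ln D)) 0.
Proof.
intros HD. apply is_RInt_gen_m_of_filterlim; [intros; apply ex_RInt_V0_integrand |].
intros P HP. exists (ln D). intros a Ha.
replace (RInt V0_integrand a (ln D)) with 0; [now apply locally_singleton |].
rewrite (RInt_ext _ (fun _ => 0)), RInt_const.
- change (scal ?k ?z) with (k * z). ring.
- intros y Hy. rewrite Rmin_left, Rmax_right in Hy by lra.
  unfold V0_integrand. rewrite Vtau_le_D; [R_eq; ring |].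
  rewrite <- (exp_ln D) by exact HD. left. apply exp_increasing. lra.
Qed.

Lemma RInt_affine_disc_density p q a b : 0 < a -> 0 < b ->
  RInt (fun y => (p * exp y + q) * disc_density sigma r tau S y) (ln a) (ln b)
  = p * S * (Ncdf (d a) - Ncdf (d b)) + q * disc * (Ncdf (d a - v) - Ncdf (d b - v)).
Proof.
intros Ha Hb.
rewrite (is_RInt_unique _ _ _ _ (is_RInt_affine_disc_density _ _ _ _ Hsigma Htau HS p q _ _)).
rewrite !affine_primitive_ln by assumption. R_eq. ring.
Qed.

Lemma exp_between a b y : 0 < a -> 0 < b -> ln a < y < ln b -> a < exp y < b.
Proof.
intros Ha Hb Hy. rewrite <- (exp_ln a), <- (exp_ln b) by assumption.
split; apply exp_increasing; lra.
Qed.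

Lemma RInt_V0_integrand_le_affine a b p q : 0 < a < b ->
  (forall u, a <= u <= b -> V u <= p * u + q) ->
  RInt V0_integrand (ln a) (ln b)
  <= p * S * (Ncdf (d a) - Ncdf (d b)) + q * disc * (Ncdf (d a - v) - Ncdf (d b - v)).
Proof.
intros Hab Hpq. rewrite <- RInt_affine_disc_density by lra.
apply RInt_le; [left; apply ln_increasing; lra | apply ex_RInt_V0_integrand
               | apply ex_RInt_affine_disc_density; assumption |].
intros y Hy. destruct (exp_between a b y) as [Hy1 Hy2]; try lra.
apply Rmult_le_compat_r; [left; apply disc_density_pos; assumption |]. apply Hpq. lra.
Qed.

Lemma RInt_V0_integrand_ge_affine a b p q : 0 < a < b ->
  (forall u, a <= u <= b -> p * u + q <= V u) ->
  p * S * (Ncdf (d a) - Ncdf (d b)) + q * disc * (Ncdf (d a - v) - Ncdf (d b - v))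
  <= RInt V0_integrand (ln a) (ln b).
Proof.
intros Hab Hpq. rewrite <- RInt_affine_disc_density by lra.
apply RInt_le; [left; apply ln_increasing; lra | apply ex_RInt_affine_disc_density; assumption
               | apply ex_RInt_V0_integrand |].
intros y Hy. destruct (exp_between a b y) as [Hy1 Hy2]; try lra.
apply Rmult_le_compat_r; [left; apply disc_density_pos; assumption |]. apply Hpq. lra.
Qed.

Lemma V0_integrand_tail_bounds Sstar : 0 < Sstar ->
  exists It : R, is_RInt_gen V0_integrand (at_point (ln Sstar)) (Rbar_locally p_infty) It /\
    S * Ncdf (d Sstar) - disc * (D + K * exp (- r * (T - tau))) * Ncdf (d Sstar - v) <= It <=
    S * Ncdf (d Sstar) + disc * (V Sstar - Sstar) * Ncdf (d Sstar - v).
Proof.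
intros HSstar.
set (q_low := - (D + K * exp (- r * (T - tau)))).
set (q_up := V Sstar - Sstar).
destruct (is_RInt_gen_p_squeeze V0_integrand
            (fun y => (1 * exp y + q_low) * disc_density sigma r tau S y)
            (fun y => (1 * exp y + q_up) * disc_density sigma r tau S y) (ln Sstar)
            (- affine_primitive sigma r tau S 1 q_low (ln Sstar))
            (- affine_primitive sigma r tau S 1 q_up (ln Sstar))
            (ex_RInt_V0_integrand _)
            (ex_RInt_affine_disc_density _ _ _ _ Hsigma Htau HS 1 q_low _)
            (ex_RInt_affine_disc_density _ _ _ _ Hsigma Htau HS 1 q_up _))
  as [It [HIt Hbounds]].
- intros y Hy. unfold V0_integrand.
  assert (Hrho := disc_density_pos sigma r tau S Hsigma Htau y).
  assert (HSy : Sstar <= exp y)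
    by (rewrite <- (exp_ln Sstar) by exact HSstar; now apply exp_le_compat).
  assert (Hlow := Vtau_ge_forward K D sigma r tau T HK Hsigma HtauT (exp y)).
  assert (Hup := Vtau_increment_le K D sigma r tau T HK Hsigma HtauT Sstar (exp y) HSy).
  unfold q_low, q_up. split; apply Rmult_le_compat_r; lra.
- apply (is_RInt_gen_affine_disc_density _ _ _ _ Hsigma Htau HS).
- apply (is_RInt_gen_affine_disc_density _ _ _ _ Hsigma Htau HS).
- exists It. split; [exact HIt |].
  rewrite !affine_primitive_ln in Hbounds by exact HSstar. destruct Hbounds as [Hlow Hup].
  split; [eapply Rle_trans; [| exact Hlow] | eapply Rle_trans; [exact Hup |]];
    right; unfold q_low, q_up; ring.
Qed.

Definition cell_integral (Sstar : R) (M i : nat) : R :=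
  RInt V0_integrand (ln (Sgrid D Sstar M (i - 1))) (ln (Sgrid D Sstar M i)).

Lemma cell_integral_le_chord Sstar M i : 0 < D -> D < Sstar -> (1 <= M)%nat -> (1 <= i)%nat ->
  cell_integral Sstar M i
  <= alpha_i K D sigma r tau T Sstar M i * A_i D sigma r tau Sstar S M i * S
     + disc * (V (Sgrid D Sstar M (i - 1))
               - alpha_i K D sigma r tau T Sstar M i * Sgrid D Sstar M (i - 1))
       * B_i D sigma r tau Sstar S M i.
Proof.
intros HD HDS HM Hi.
assert (Hstep := Sgrid_step D Sstar M i Hi). assert (Ha := Sgrid_ge D Sstar M (i - 1) HDS).
assert (Hh : 0 < (Sstar - D) / INR M) by (apply Rdiv_lt_0_compat; [lra | apply lt_0_INR; lia]).
set (a := Sgrid D Sstar M (i - 1)) in *. set (b := Sgrid D Sstar M i) in *.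
set (alpha := alpha_i K D sigma r tau T Sstar M i).
assert (Halpha : alpha * (b - a) = V b - V a).
{ unfold alpha, alpha_i. fold a b. rewrite Hstep. field. split; [apply not_0_INR; lia | lra]. }
eapply Rle_trans.
- apply (RInt_V0_integrand_le_affine a b alpha (V a - alpha * a)); [lra |].
  intros u Hu. apply Rmult_le_reg_l with (b - a); [lra |].
  assert (Hc := Vtau_le_chord K D sigma r tau T HK Hsigma HtauT a b u Hu). nra.
- right. unfold A_i, B_i, d_i. fold a b. ring.
Qed.

Lemma cell_integral_ge_tangent Sstar M i : 0 < D -> D < Sstar -> (1 <= M)%nat -> (1 <= i)%nat ->
  S * (Vtau' K D sigma r tau T (Smid D Sstar M i) * A_i D sigma r tau Sstar S M i)
  + disc * ((V (Smid D Sstar M i) - Vtau' K D sigma r tau T (Smid D Sstar M i) * Smid D Sstar M i)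
            * B_i D sigma r tau Sstar S M i)
  <= cell_integral Sstar M i.
Proof.
intros HD HDS HM Hi.
assert (Hstep := Sgrid_step D Sstar M i Hi). assert (Ha := Sgrid_ge D Sstar M (i - 1) HDS).
assert (Hh : 0 < (Sstar - D) / INR M) by (apply Rdiv_lt_0_compat; [lra | apply lt_0_INR; lia]).
assert (Hm : D < Smid D Sstar M i) by (unfold Smid; lra).
set (a := Sgrid D Sstar M (i - 1)) in *. set (b := Sgrid D Sstar M i) in *.
set (m := Smid D Sstar M i) in *. set (slope := Vtau' K D sigma r tau T m).
eapply Rle_trans.
- right. symmetry. unfold A_i, B_i, d_i. fold a b.
  instantiate (1 := slope * S * (Ncdf (d a) - Ncdf (d b))
                    + (V m - slope * m) * disc * (Ncdf (d a - v) - Ncdf (d b - v))).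
  ring.
- apply RInt_V0_integrand_ge_affine; [lra |].
  intros u _. apply (Vtau_ge_tangent K D sigma r tau T HK Hsigma HtauT m u Hm).
Qed.

Lemma V0_eq_cells_plus_tail Sstar M (It : R) : 0 < D -> D < Sstar -> (1 <= M)%nat ->
  is_RInt_gen V0_integrand (at_point (ln Sstar)) (Rbar_locally p_infty) It ->
  V0 K D sigma r tau T S = sum_n_m (cell_integral Sstar M) 1 M + It.
Proof.
intros HD HDS HM HIt.
apply V0_eq_of_is_RInt_gen. rewrite <- (Rplus_0_l (sum_n_m _ 1 M)).
set (cells := sum_n_m _ 1 M).
apply (is_RInt_gen_Chasles _ (ln Sstar) (0 + cells) It); [| exact HIt].
apply (is_RInt_gen_Chasles _ (ln D) 0 cells); [now apply is_RInt_gen_V0_integrand_le_D |].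
apply is_RInt_gen_at_point.
assert (Hsum := RInt_Chasles_sum_n_m V0_integrand (fun i => ln (Sgrid D Sstar M i)) M
                  ex_RInt_V0_integrand HM).
cbv beta in Hsum. rewrite Sgrid_0, Sgrid_M in Hsum by exact HM.
unfold cells, cell_integral.
replace (sum_n_m _ 1 M) with (RInt V0_integrand (ln D) (ln Sstar)) by exact Hsum.
apply RInt_correct_R, ex_RInt_V0_integrand.
Qed.

End PriceBounds.

Theorem theorem1 (K D sigma r tau T Sstar S : R) (M : nat) :
  0 < K -> 0 < D -> 0 < sigma -> 0 < tau -> tau < T ->
  D < Sstar -> (1 <= M)%nat -> 0 < S ->
  Vminus K D sigma r tau T Sstar S M <= V0 K D sigma r tau T S
  /\ V0 K D sigma r tau T S <= Vplus K D sigma r tau T Sstar S M.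
Proof.
intros HK HD Hsigma Htau HtauT HDS HM HS.
destruct (V0_integrand_tail_bounds K D sigma r tau T S HK Hsigma Htau HtauT HS Sstar)
  as [It [HIt [Htail_low Htail_up]]]; [lra |].
rewrite (V0_eq_cells_plus_tail K D sigma r tau T S HK Hsigma Htau HtauT Sstar M It HD HDS HM HIt).
split.
- assert (Hcells := sum_n_m_le_loc _ _ 1 M (fun i Hi =>
    cell_integral_ge_tangent K D sigma r tau T S HK Hsigma Htau HtauT HS Sstar M i
      HD HDS HM (proj1 Hi))).
  unfold Vminus. cbv zeta. rewrite sum_n_m_scal_plus. lra.
- assert (Hcells := sum_n_m_le_loc _ _ 1 M (fun i Hi =>
    cell_integral_le_chord K D sigma r tau T S HK Hsigma Htau HtauT HS Sstar M i
      HD HDS HM (proj1 Hi))).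
  unfold Vplus. cbv zeta. lra.
Qed.
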